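(* For all integers $n\geq 0$ and $i\geq 1$, $$\bar a_{3i+2}(3n+2)\equiv 0 \pmod 3.$$
   Context: For $|q|<1$ and integers $m\geq 1$, write $f_m:=\prod_{j\geq 1}(1-q^{jm})$. For an integer $c\geq 1$, the generalized overcubic partition function $\bar a_c(n)$ is defined by $$\sum_{n\geq 0}\bar a_c(n)q^n=\frac{f_4^{c-1}}{f_1^2f_2^{2c-3}}.$$ *)

From HB Require Import structures.
From mathcomp Require Import all_boot all_order all_algebra.
Set Implicit Arguments. Unset Strict Implicit. Unset Printing Implicit Defensive.
Import Order.TTheory GRing.Theory Num.Theory.
Local Open Scope ring_scope.

(* Truncations of the q-series f_m = prod_{j>=1} (1 - q^{jm}) and of 1/f_m,
   as integer polynomials that agree with the true series modulo q^(N+1). *)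
Definition f_trunc (m N : nat) : {poly int} :=
  \prod_(1 <= j < N.+1) (1 - 'X^(j * m)).

(* 1/(1 - q^{jm}) = sum_k q^{jmk}, truncated *)
Definition finv_trunc (m N : nat) : {poly int} :=
  \prod_(1 <= j < N.+1) \sum_(k < N.+1) 'X^(j * m * k).

(* f_2^{-(2c-3)} : the exponent 2c-3 is an integer, negative only for c = 1. *)
Definition f2_factor (c N : nat) : {poly int} :=
  if (3 <= 2 * c)%N then finv_trunc 2 N ^+ (2 * c - 3)
  else f_trunc 2 N ^+ (3 - 2 * c).

(* generalized overcubic partition function: the coefficient of q^n in
   f_4^{c-1} / (f_1^2 f_2^{2c-3}). *)
Definition abar (c n : nat) : int :=
  (f_trunc 4 n ^+ (c - 1) * finv_trunc 1 n ^+ 2 * f2_factor c n)`_n.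

(* The generating function equals (f_4^i / (f_1 f_2^(2i)))^3 * f_1 f_4 / f_2.
   Modulo 3 a cube G(q)^3 is G(q^3), so the coefficient of q^(3n+2) is
   divisible by 3 as soon as psi(-q) = f_1 f_4 / f_2 has no terms q^e with
   e = 2 (mod 3).  By the Jacobi triple product
   psi(-q) = sum_(k in Z) (-1)^k q^(k(2k+1)), and k(2k+1) is never 2 mod 3.
   All series are handled as truncated products, up to congruence modulo X^M;
   the triple product comes from a finite form obtained from the q-binomial
   theorem. *)

From mathcomp Require Import all_boot all_order all_algebra finfield.
From mathcomp Require Import zify ring.

Set Implicit Arguments.
Unset Strict Implicit.
Unset Printing Implicit Defensive.

Import GRing.Theory.
Local Open Scope ring_scope.

Definition eqmodXn (R : comNzRingType) (M : nat) (p q : {poly R}) :=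
  exists r, p = q + 'X^M * r.

Notation "p = q %[modXn M ]" := (eqmodXn M p q)
  (at level 70, q at next level, format "p  =  q  %[modXn  M ]") : ring_scope.

Section EqModXn.
Variable R : comNzRingType.
Implicit Types (p q r : {poly R}) (M : nat).

Lemma eqmodXn_refl M p : p = p %[modXn M].
Proof. by exists 0; rewrite mulr0 addr0. Qed.

Lemma eqmodXn_sym M p q : p = q %[modXn M] -> q = p %[modXn M].
Proof. by case=> r ->; exists (- r); ring. Qed.

Lemma eqmodXn_trans M p q r : p = q %[modXn M] -> q = r %[modXn M] -> p = r %[modXn M].
Proof. by case=> a -> [b ->]; exists (a + b); ring. Qed.

Lemma eqmodXnD M p1 q1 p2 q2 :
  p1 = q1 %[modXn M] -> p2 = q2 %[modXn M] -> p1 + p2 = q1 + q2 %[modXn M].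
Proof. by case=> a -> [b ->]; exists (a + b); ring. Qed.

Lemma eqmodXnM M p1 q1 p2 q2 :
  p1 = q1 %[modXn M] -> p2 = q2 %[modXn M] -> p1 * p2 = q1 * q2 %[modXn M].
Proof. by case=> a -> [b ->]; exists (a * q2 + q1 * b + 'X^M * a * b); ring. Qed.

Lemma eqmodXnMl M p q1 q2 : q1 = q2 %[modXn M] -> p * q1 = p * q2 %[modXn M].
Proof. exact: eqmodXnM (eqmodXn_refl M p). Qed.

Lemma eqmodXnMr M p q1 q2 : q1 = q2 %[modXn M] -> q1 * p = q2 * p %[modXn M].
Proof. by move/eqmodXnM; apply; apply: eqmodXn_refl. Qed.

Lemma eqmodXn_sum_nat M a b (F G : nat -> {poly R}) :
  (forall i, (a <= i < b)%N -> F i = G i %[modXn M]) ->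
  \sum_(a <= i < b) F i = \sum_(a <= i < b) G i %[modXn M].
Proof.
move=> FG; rewrite big_nat_cond [X in _ = X %[modXn _]]big_nat_cond.
apply: big_ind2 => [|p1 q1 p2 q2|i /andP[/FG //]]; first exact: eqmodXn_refl.
exact: eqmodXnD.
Qed.

Lemma eqmodXn_prod1 M (I : Type) (s : seq I) (P : pred I) (F : I -> {poly R}) :
  (forall i, P i -> F i = 1 %[modXn M]) -> \prod_(i <- s | P i) F i = 1 %[modXn M].
Proof.
move=> F1; apply: (big_ind (eqmodXn M ^~ 1)) => //; first exact: eqmodXn_refl.
by move=> p q p1 q1; rewrite -[X in _ = X %[modXn _]](mulr1 1); apply: eqmodXnM.
Qed.

Lemma eqmodXn_mulXn M k p q : (M <= k)%N -> 'X^k * p = 'X^k * q %[modXn M].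
Proof. by move=> /subnKC <-; exists ('X^(k - M) * (p - q)); rewrite exprD; ring. Qed.

Lemma eqmodXn_1subXn M k : (M <= k)%N -> (1 - 'X^k : {poly R}) = 1 %[modXn M].
Proof.
move=> leMk; rewrite -mulrN1 -[X in _ = X %[modXn _]]addr0 -(mulr0 'X^k).
exact: eqmodXnD (eqmodXn_refl _ _) (eqmodXn_mulXn _ _ leMk).
Qed.

Lemma eqmodXn_coef M p q k : p = q %[modXn M] -> (k < M)%N -> p`_k = q`_k.
Proof. by case=> r -> ltkM; rewrite coefD coefXnM ltkM addr0. Qed.

End EqModXn.

Lemma Fp_poly_Frobenius p (q : {poly 'F_p}) : prime p -> q ^+ p = q \Po 'X^p.
Proof.
move=> p_pr; have pchar_p : p \in [pchar {poly 'F_p}] by rewrite pchar_poly pchar_Fp.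
elim/poly_ind: q => [|q c IHq]; first by rewrite comp_poly0 expr0n gtn_eqF ?prime_gt0.
rewrite comp_poly_MXaddC -IHq -!(pFrobenius_autE pchar_p).
rewrite pFrobenius_autD_comm; last exact: mulrC.
rewrite pFrobenius_autM_comm; last exact: mulrC.
by rewrite !pFrobenius_autE -rmorphXn /= -[X in c ^+ X](card_Fp p_pr) expf_card.
Qed.

Lemma coef_comp_polyXnM_eq0 (R : nzRingType) (d r k : nat) (U S : {poly R}) :
  (0 < d)%N -> (forall j, (j %% d = r)%N -> S`_j = 0) -> (k %% d = r)%N ->
  ((U \Po 'X^d) * S)`_k = 0.
Proof.
move=> d_gt0 S_gap k_r; rewrite coefM big1 // => j _.
rewrite coef_comp_poly_Xn //; case: ifP => [/dvdnP[t j_td] | _]; last by rewrite mul0r.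
rewrite S_gap ?mulr0 //; have := leq_ord j; rewrite -k_r j_td => le_td_k.
by rewrite -{2}(subnK le_td_k) addnC modnMDl.
Qed.

Lemma dvdz_coef_Frobenius p r k (B S : {poly int}) :
  prime p -> (forall j, (j %% p = r)%N -> S`_j = 0) -> (k %% p = r)%N ->
  (p %| (B ^+ p * S)`_k)%Z.
Proof.
move=> p_pr S_gap k_r; rewrite (dvdz_pcharf (pchar_Fp p_pr)).
rewrite -(coef_map (intr : int -> 'F_p)) rmorphM rmorphXn /= Fp_poly_Frobenius //.
apply/eqP; apply: (coef_comp_polyXnM_eq0 _ (prime_gt0 p_pr) _ k_r) => j /S_gap S_j0.
by rewrite coef_map S_j0.
Qed.

Section GaussianBinomial.
Variables (R : comNzRingType) (q : R).

Fixpoint qbinom (N m : nat) : R :=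
  match N, m with
  | _, 0 => 1
  | 0, _.+1 => 0
  | N.+1, m.+1 => qbinom N m + q ^+ m.+1 * qbinom N m.+1
  end.

Definition qpoch (L : nat) : R := \prod_(1 <= j < L.+1) (1 - q ^+ j).

Lemma qbinomN0 N : qbinom N 0 = 1.
Proof. by case: N. Qed.

Lemma qbinom_gt N m : (N < m)%N -> qbinom N m = 0.
Proof. by elim: N m => [|N IHN] [|m] //= ltNm; rewrite !IHN ?mulr0 ?addr0 // ltnW. Qed.

Lemma qpoch0 : qpoch 0 = 1.
Proof. by rewrite /qpoch big_geq. Qed.

Lemma qpochS L : qpoch L.+1 = qpoch L * (1 - q ^+ L.+1).
Proof. by rewrite /qpoch big_nat_recr. Qed.

Lemma qbinom_qpoch N m : (m <= N)%N -> qbinom N m * qpoch m * qpoch (N - m) = qpoch N.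
Proof.
elim: N m => [|N IHN] [|m] //= le_mN; rewrite ?qpoch0 ?qbinomN0 ?mul1r //.
have IHm := IHN m le_mN; rewrite subSS.
have [lt_mN | le_Nm] := ltnP m N; last first.
  have eq_Nm : N = m by lia.
  subst N; move: IHm; rewrite subnn qpoch0 !mulr1 => IHm.
  by rewrite (qbinom_gt (ltnSn m)) mulr0 addr0 qpochS mulrA IHm.
have IHm1 := IHN m.+1 lt_mN.
have qpoch_Nm : qpoch (N - m) = qpoch (N - m.+1) * (1 - q ^+ (N - m)).
  by rewrite -(subnSK lt_mN) qpochS.
have q_N1 : q ^+ N.+1 = q ^+ m.+1 * q ^+ (N - m) by rewrite -exprD addSn subnKC.
transitivity (qbinom N m * qpoch m * qpoch (N - m) * (1 - q ^+ m.+1)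
  + q ^+ m.+1 * (qbinom N m.+1 * qpoch m.+1 * qpoch (N - m.+1)) * (1 - q ^+ (N - m))).
  by rewrite qpochS qpoch_Nm; ring.
by rewrite IHm IHm1 [RHS]qpochS q_N1; ring.
Qed.

Lemma prod_qbinomial (y z : R) N :
  \prod_(0 <= i < N) (y + z * q ^+ i) =
  \sum_(0 <= m < N.+1) qbinom N m * q ^+ 'C(m, 2) * z ^+ m * y ^+ (N - m).
Proof.
elim: N z => [|N IHN] z; first by rewrite big_geq // big_nat1 /= !mulr1.
rewrite big_nat_recl // (eq_bigr (fun i => y + z * q * q ^+ i)); last first.
  by move=> i _; rewrite exprS mulrA.
rewrite IHN expr0 mulr1 mulrDl [RHS]big_nat_recl //= !mul1r subn0.
set S := \sum_(0 <= m < N.+1) _.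
have zS : z * S = \sum_(0 <= m < N.+1) qbinom N m * q ^+ 'C(m.+1, 2) * z ^+ m.+1 * y ^+ (N - m).
  rewrite mulr_sumr; apply: eq_bigr => m _.
  by rewrite binS bin1 exprD exprMn exprS; ring.
have yS : y * S = y ^+ N.+1 +
    \sum_(0 <= m < N.+1) q ^+ m.+1 * qbinom N m.+1 * q ^+ 'C(m.+1, 2) * z ^+ m.+1 * y ^+ (N - m).
  rewrite mulr_sumr big_nat_recl // big_nat_recr //= (qbinom_gt (ltnSn N)) !mulr0 !mul0r addr0.
  rewrite qbinomN0 subn0 !mul1r -exprS; congr (_ + _); apply: eq_big_nat => m /andP[_ lt_mN].
  by rewrite -(subnSK lt_mN) binS bin1 exprD exprMn !exprS; ring.
rewrite zS yS -addrA -big_split /=; congr (_ + _); apply: eq_bigr => m _.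
by rewrite subSS; ring.
Qed.

End GaussianBinomial.

Lemma qpoch_Xn d L : qpoch 'X^d L = f_trunc d L.
Proof. by apply: eq_bigr => j _; rewrite -exprM mulnC. Qed.

Lemma f_truncS d L : f_trunc d L.+1 = f_trunc d L * (1 - 'X^(L.+1 * d)).
Proof. by rewrite /f_trunc big_nat_recr. Qed.

Lemma f_trunc_eqmodXn d K L M : (M <= d * K.+1)%N -> (M <= d * L.+1)%N ->
  f_trunc d K = f_trunc d L %[modXn M].
Proof.
wlog le_KL : K L / (K <= L)%N => [hwlog|leMK _].
  by case/orP: (leq_total K L) => ? ? ?; [|apply: eqmodXn_sym]; apply: hwlog.
rewrite /f_trunc [X in _ = X %[modXn _]](big_cat_nat _ (n := K.+1)) //=.
rewrite -[X in X = _ %[modXn _]]mulr1; apply: eqmodXnM; first exact: eqmodXn_refl.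
apply/eqmodXn_sym; rewrite big_nat_cond; apply: eqmodXn_prod1 => j /andP[/andP[lt_Kj _] _].
by apply: eqmodXn_1subXn; rewrite (leq_trans leMK) // mulnC leq_mul2r lt_Kj orbT.
Qed.

Lemma f_trunc_finv_trunc m N M : (M <= m * N.+1)%N ->
  f_trunc m N * finv_trunc m N = 1 %[modXn M].
Proof.
move=> leMN; rewrite /f_trunc /finv_trunc -big_split big_nat_cond /=.
apply: eqmodXn_prod1 => j /andP[/andP[j_gt0 _] _].
have geom : (1 - 'X^(j * m)) * \sum_(k < N.+1) 'X^(j * m * k) = 1 - 'X^(j * m * N.+1) :> {poly int}.
  rewrite [in RHS]exprM -[RHS]opprB subrX1 -mulNr opprB; congr (_ * _).
  by apply: eq_bigr => k _; rewrite exprM.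
rewrite geom; apply: eqmodXn_1subXn; rewrite (leq_trans leMN) //.
by rewrite -mulnA leq_pmull.
Qed.

Lemma qbinomXn_f_trunc_eqmodXn d N m L M : (m <= N)%N ->
  (M <= d * m.+1)%N -> (M <= d * (N - m).+1)%N -> (M <= d * L.+1)%N ->
  qbinom 'X^d N m * f_trunc d L = 1 %[modXn M].
Proof.
move=> le_mN le_Mm le_MNm le_ML.
have le_MN : (M <= d * N.+1)%N by rewrite (leq_trans le_Mm) // leq_mul2l ltnS le_mN orbT.
have qbinom_f_trunc := qbinom_qpoch ('X^d : {poly int}) le_mN.
rewrite !qpoch_Xn mulrAC in qbinom_f_trunc.
apply: (eqmodXn_trans
  (q := qbinom 'X^d N m * f_trunc d (N - m) * (f_trunc d m * finv_trunc d m))).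
  rewrite -[X in X = _ %[modXn _]]mulr1; apply: eqmodXnM.
    by apply/eqmodXnMl/f_trunc_eqmodXn.
  exact/eqmodXn_sym/f_trunc_finv_trunc.
rewrite mulrA qbinom_f_trunc; apply: eqmodXn_trans (f_trunc_finv_trunc le_Mm).
by apply/eqmodXnMr/f_trunc_eqmodXn.
Qed.

Definition poch4 (a n : nat) : {poly int} := \prod_(0 <= j < n) (1 - 'X^(4 * j + a)).

Lemma f_trunc1_split n : f_trunc 1 (4 * n) = f_trunc 2 (2 * n) * (poch4 1 n * poch4 3 n).
Proof.
elim: n => [|n IHn]; first by rewrite /f_trunc /poch4 !big_geq // !mulr1.
have -> : (4 * n.+1 = (4 * n).+4)%N by lia.
have -> : (2 * n.+1 = (2 * n).+2)%N by lia.
rewrite !f_truncS IHn /poch4 !big_nat_recr //= !muln1.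
have -> : ((4 * n).+4 = (2 * n).+2 * 2)%N by lia.
have -> : ((4 * n).+3 = 4 * n + 3)%N by lia.
have -> : ((4 * n).+2 = (2 * n).+1 * 2)%N by lia.
have -> : ((4 * n).+1 = 4 * n + 1)%N by lia.
ring.
Qed.

Section ThetaExponent.
Local Open Scope nat_scope.

(* k (2k + 1) for k = m - n in Z *)
Definition theta_exp (m n : nat) : nat :=
  if n <= m then (m - n) * (2 * (m - n) + 1) else (n - m) * (2 * (n - m) - 1).

Lemma theta_exp_mod3 m n : theta_exp m n %% 3 != 2.
Proof.
have mod3 k : (k * (2 * k + 1)) %% 3 != 2 /\ (k.+1 * (2 * k + 1)) %% 3 != 2.
  rewrite -[k * _ %% 3]modnMm -[k.+1 * _ %% 3]modnMm -[k.+1]addn1 -[(k + 1) %% 3]modnDml.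
  rewrite -[(2 * k + 1) %% 3]modnDml -[2 * k %% 3]modnMmr.
  by case: (k %% 3) (ltn_pmod k (isT : 0 < 3)) => [|[|[|]]].
rewrite /theta_exp; case: (leqP n m) => [_ | lt_mn]; first by case: (mod3 (m - n)).
have [s ->] : exists s, n - m = s.+1 by exists (n - m).-1; lia.
have -> : 2 * s.+1 - 1 = 2 * s + 1 by lia.
by case: (mod3 s).
Qed.

Lemma theta_exp_ge m n : (n - m) + (m - n) <= theta_exp m n.
Proof.
rewrite /theta_exp; case: (leqP n m) => [le_nm | lt_mn].
  by rewrite (eqP le_nm) add0n leq_pmulr // addn1.
by rewrite (_ : m - n = 0) ?addn0 ?leq_pmulr //; lia.
Qed.

Lemma theta_exp_eq m n : m <= 2 * n ->
  4 * 'C(m, 2) + 4 * m + (4 * n + 1) * (2 * n - m) = 6 * n * n + 3 * n + theta_exp m n.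
Proof.
move=> le_m2n; have twoC : 'C(m, 2) * 2 + m = m * m.
  by elim: (m) => // k IHk; rewrite binS bin1; nia.
rewrite /theta_exp; case: (leqP n m) => [le_nm | lt_mn].
  have [k [s [eq_m eq_n]]] : exists k s, m = n + k /\ n = k + s.
    by exists (m - n), (n - (m - n)); lia.
  subst m n; rewrite addKn (_ : 2 * (k + s) - (k + s + k) = s); lia.
have [k eq_n] : exists k, n = m + k.+1 by exists (n - m).-1; lia.
subst n; rewrite addKn (_ : 2 * (m + k.+1) - m = m + 2 * k.+1); lia.
Qed.

End ThetaExponent.

Lemma sum_4S n : (\sum_(0 <= i < n) 4 * i.+1 = 2 * n * n.+1)%N.
Proof.
elim: n => [|n IHn]; first by rewrite big_geq.
by rewrite big_nat_recr //= IHn; ring.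
Qed.

Lemma prod_shifted_poch4 n :
  \prod_(0 <= i < 2 * n) ('X^(4 * n + 1) + (- 'X^4) * ('X^4) ^+ i) =
  (-1) ^+ n * 'X^(6 * n * n + 3 * n) * (poch4 1 n * poch4 3 n) :> {poly int}.
Proof.
rewrite (big_cat_nat _ (n := n)) //=; last by lia.
have low : \prod_(0 <= i < n) ('X^(4 * n + 1) + (- 'X^4) * ('X^4) ^+ i) =
    (-1) ^+ n * 'X^(2 * n * n.+1) * poch4 1 n :> {poly int}.
  rewrite (eq_big_nat _ _ (F2 := fun i => -1 * 'X^(4 * i.+1) * (1 - 'X^(4 * (n - i.+1) + 1)))).
    rewrite !big_split /= prodr_const_nat subn0 prodrXr sum_4S /poch4 big_nat_rev /=.
    congr (_ * _); apply: eq_big_nat => i /andP[_ lt_in].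
    by rewrite add0n (_ : 4 * (n - (n - i.+1).+1) + 1 = 4 * i + 1)%N //; lia.
  move=> i /andP[_ lt_in].
  have -> : 'X^(4 * n + 1) = 'X^(4 * i.+1) * 'X^(4 * (n - i.+1) + 1) :> {poly int}.
    by rewrite -exprD; congr 'X^_; lia.
  by rewrite -exprM mulnS exprD; ring.
have high : \prod_(n <= i < 2 * n) ('X^(4 * n + 1) + (- 'X^4) * ('X^4) ^+ i) =
    'X^((4 * n + 1) * n) * poch4 3 n :> {poly int}.
  rewrite -{1}[n]add0n big_addn (_ : 2 * n - n = n)%N; last by lia.
  rewrite (eq_big_nat _ _ (F2 := fun j => 'X^(4 * n + 1) * (1 - 'X^(4 * j + 3)))).
    by rewrite big_split /= prodr_const_nat subn0 exprM.
  move=> j _; rewrite mulrBr mulr1 mulNr -exprM -!exprD.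
  by congr (_ - 'X^_); lia.
rewrite low high (_ : 6 * n * n + 3 * n = 2 * n * n.+1 + (4 * n + 1) * n)%N ?exprD; first ring.
by ring.
Qed.

(* A finite form of the Jacobi triple product. *)
Lemma poch4_qbinomial n :
  poch4 1 n * poch4 3 n = (-1) ^+ n *
    \sum_(0 <= m < (2 * n).+1) (-1) ^+ m * qbinom 'X^4 (2 * n) m * 'X^(theta_exp m n).
Proof.
set k := (6 * n * n + 3 * n)%N.
have Xk_neq0 : 'X^k != 0 :> {poly int} by rewrite monic_neq0 ?monicXn.
apply: (mulfI Xk_neq0).
transitivity ((-1) ^+ n * ((-1) ^+ n * 'X^k * (poch4 1 n * poch4 3 n))).
  by rewrite -mulrA signrMK.
rewrite -prod_shifted_poch4 prod_qbinomial mulrCA; congr (_ * _); rewrite mulr_sumr.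
apply: eq_big_nat => m /andP[_ le_m2n]; rewrite ltnS in le_m2n.
rewrite -!exprM (exprNn 'X^4) -exprM.
transitivity ((-1) ^+ m * qbinom 'X^4 (2 * n) m *
  ('X^(4 * 'C(m, 2)) * 'X^(4 * m) * 'X^((4 * n + 1) * (2 * n - m))) : {poly int}).
  by ring.
by rewrite -!exprD theta_exp_eq // exprD; ring.
Qed.

Definition theta_sum (n : nat) : {poly int} :=
  (-1) ^+ n * \sum_(0 <= m < (2 * n).+1) (-1) ^+ m * 'X^(theta_exp m n).

Lemma coef_theta_sum_mod3 n k : (k %% 3 = 2)%N -> (theta_sum n)`_k = 0.
Proof.
move=> k_mod3; rewrite /theta_sum mulr_sumr coef_sum big1 // => m _.
rewrite mulrA -exprD -signr_odd mulr_sign; case: ifP => _; rewrite ?coefN coefXn;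
  by case: eqP => // eq_k; move: (theta_exp_mod3 m n); rewrite -eq_k k_mod3.
Qed.

Lemma poch4_f_trunc4_eqmodXn n L M : (2 * M <= n)%N -> (M <= 4 * L.+1)%N ->
  poch4 1 n * poch4 3 n * f_trunc 4 L = theta_sum n %[modXn M].
Proof.
move=> le_2Mn le_ML; rewrite poch4_qbinomial /theta_sum -mulrA mulr_suml.
apply: eqmodXnMl; apply: eqmodXn_sum_nat => m /andP[_ le_m2n]; rewrite ltnS in le_m2n.
(* Terms with e >= M vanish; for the others m and 2n - m both exceed M, so
   that [Q] is already the inverse of f_4 modulo X^M. *)
set e := theta_exp m n; set Q := qbinom _ _ _.
have -> : (-1) ^+ m * Q * 'X^e * f_trunc 4 L = 'X^e * ((-1) ^+ m * (Q * f_trunc 4 L)) by ring.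
rewrite [X in _ = X %[modXn _]]mulrC.
have [le_Me | lt_eM] := leqP M e; first exact: eqmodXn_mulXn.
have := theta_exp_ge m n; rewrite -/e => ge_e.
rewrite -[X in _ = X %[modXn _]]mulr1 -mulrA; apply: eqmodXnMl; apply: eqmodXnMl.
by apply: qbinomXn_f_trunc_eqmodXn; lia.
Qed.

Lemma f1_f4_finv2_eqmodXn L :
  f_trunc 1 L * f_trunc 4 L * finv_trunc 2 L = theta_sum (2 * L.+1) %[modXn L.+1].
Proof.
set n := (2 * L.+1)%N; set P := poch4 1 n * poch4 3 n.
have f1_split : f_trunc 1 L = f_trunc 2 (2 * n) * P %[modXn L.+1].
  by rewrite -f_trunc1_split; apply: f_trunc_eqmodXn; lia.
have f2_stable : f_trunc 2 (2 * n) = f_trunc 2 L %[modXn L.+1].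
  by apply: f_trunc_eqmodXn; lia.
apply: (eqmodXn_trans (q := f_trunc 2 (2 * n) * P * f_trunc 4 L * finv_trunc 2 L)).
  by apply: eqmodXnMr; apply: eqmodXnMr.
have -> : f_trunc 2 (2 * n) * P * f_trunc 4 L * finv_trunc 2 L =
  f_trunc 2 (2 * n) * finv_trunc 2 L * (P * f_trunc 4 L) by ring.
rewrite -[X in _ = X %[modXn _]]mul1r; apply: eqmodXnM.
  by apply: eqmodXn_trans (f_trunc_finv_trunc _); [apply: eqmodXnMr | lia].
by apply: poch4_f_trunc4_eqmodXn; lia.
Qed.

Theorem mainTheorem3 (n i : nat) (hi : (1 <= i)%N) :
  (3 %| abar (3 * i + 2) (3 * n + 2))%Z.
Proof.
rewrite /abar /f2_factor ifT; last by lia.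
rewrite (_ : 3 * i + 2 - 1 = i * 3 + 1)%N; last by lia.
rewrite (_ : 2 * (3 * i + 2) - 3 = 2 * i * 3 + 1)%N; last by lia.
set L := (3 * n + 2)%N; set F1 := f_trunc 1 L; set F4 := f_trunc 4 L.
set I1 := finv_trunc 1 L; set I2 := finv_trunc 2 L.
set A := F4 ^+ (i * 3 + 1) * I1 ^+ 2 * I2 ^+ (2 * i * 3 + 1).
set B := F4 ^+ i * I1 * I2 ^+ (2 * i).
have reduce : A = B ^+ 3 * theta_sum (2 * L.+1) %[modXn L.+1].
  apply: (eqmodXn_trans (q := A * (F1 * I1))).
    rewrite -[X in X = _ %[modXn _]]mulr1; apply: eqmodXnMl; apply: eqmodXn_sym.
    by apply: f_trunc_finv_trunc; rewrite mul1n.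
  have -> : A * (F1 * I1) = B ^+ 3 * (F1 * F4 * I2).
    by rewrite /A /B !exprMn -!exprM !exprD !expr1; ring.
  by apply: eqmodXnMl; apply: f1_f4_finv2_eqmodXn.
rewrite (eqmodXn_coef reduce) //; apply: (dvdz_coef_Frobenius (r := 2)) => //.
  exact: coef_theta_sum_mod3.
by rewrite /L mulnC modnMDl.
Qed.
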